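(* Let $\kappa_1,\kappa_2,\kappa_5,\kappa_6,\kappa_7,\kappa_8,\theta,\mu>0$ and consider the ODE system, with positive initial values, $c'=\kappa_6c_p-\kappa_5c$, $c_p'=\kappa_5c+\kappa_8c_{pp}-(\kappa_6+\kappa_7)c_p$, $c_{pp}'=\kappa_7c_p-\kappa_8c_{pp}$, $(x^* )'=\kappa_2c_{pp}m-\kappa_1x^*$, $z'=z(\theta m-\mu)$, where $m(t)=\dfrac{\kappa_1x^*(t)+\mu z(t)}{\kappa_2c_{pp}(t)+\theta z(t)}$. Let $M=x^*(0)+z(0)$, $L=c(0)+c_p(0)+c_{pp}(0)$, and $\bar c_{pp}=\dfrac{\kappa_5\kappa_6\kappa_7\kappa_8L}{\kappa_6^2\kappa_8^2+\kappa_5\kappa_6\kappa_8^2+\kappa_5\kappa_6\kappa_7\kappa_8}$. If $\theta\kappa_1M>\mu\kappa_2\bar c_{pp}$, then $z(t)\to\dfrac{\theta\kappa_1M-\mu\kappa_2\bar c_{pp}}{\theta\kappa_1}$ as $t\to\infty$.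
   Context: This is the deterministic part of a hybrid approximation of a dimer-catalyzer network controlled by a basic ACR controller; $m(t)$ represents the mean of the stochastically modeled target species. (The full system also contains a variable $x_1$ with $x_1'=0$, which does not affect the equations above.) *)

From Stdlib Require Import Reals.
From Coquelicot Require Import Coquelicot.
Open Scope R_scope.

Definition m_of (k1 k2 theta mu xs z cpp : R) : R :=
  (k1 * xs + mu * z) / (k2 * cpp + theta * z).

Definition cpp_bar (k5 k6 k7 k8 L : R) : R :=
  k5 * k6 * k7 * k8 * L /
  (k6 ^ 2 * k8 ^ 2 + k5 * k6 * k8 ^ 2 + k5 * k6 * k7 * k8).

Definition right_cont (f : R -> R) (a : R) : Prop :=
  filterlim f (at_right a) (locally (f a)).

From Stdlib Require Import Reals Lra Psatz Classical.
From Coquelicot Require Import Coquelicot.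
Open Scope R_scope.

(* The cascade (c, c_p, c_pp) is linear and closed, so it conserves L = c + c_p + c_pp;
   its equilibrium e of mass L is in detailed balance and has e_3 = \bar c_pp.  The
   chi-square distance V = sum_i (x_i - e_i)^2 / e_i to e satisfies V' <= - min(k5, k8) V,
   hence c_pp -> \bar c_pp.

   The controller conserves M = x^* + z, and
     (ln z)' = (theta k1 (M - z) - mu k2 c_pp) / (k2 c_pp + theta z).
   Let \bar z = (theta k1 M - mu k2 \bar c_pp) / (theta k1) > 0.  Once c_pp is close to
   \bar c_pp, this rate is at least some r > 0 whenever z < \bar z - eps and at most - r
   whenever z > \bar z + eps, since the denominator stays below k2 L + theta M.  So ln z
   enters and never leaves [ln (\bar z - eps), ln (\bar z + eps)].

   All denominators stay positive because every species stays positive: by continuous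
   induction, as long as all species are positive each of them satisfies f' + k f >= 0. *)

(** * Calculus on the half-line *)

Lemma MVT_open f df a b : a < b ->
  (forall x, a < x < b -> is_derive f x (df x)) ->
  (forall x, a <= x <= b -> continuity_pt f x) ->
  exists c, a < c < b /\ f b - f a = df c * (b - a).
Proof.
  intros Hab Hd Hc.
  assert (Hf : forall c, a < c < b -> derivable_pt f c).
  { intros c Hc'. exists (df c). now apply is_derive_Reals, Hd. }
  assert (Hid : forall c, a < c < b -> derivable_pt id c).
  { intros c _. apply derivable_pt_id. }
  destruct (MVT f id a b Hf Hid Hab Hc) as [c [Hc' E]].
  { intros c _. apply derivable_continuous_pt, derivable_pt_id. }
  exists c; split; [exact Hc'|].
  rewrite (derive_pt_eq_0 f c (df c) (Hf c Hc')) in E by now apply is_derive_Reals, Hd.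
  rewrite (derive_pt_eq_0 id c 1 (Hid c Hc')) in E by apply derivable_pt_lim_id.
  unfold id in E. lra.
Qed.

Lemma continuity_pt_is_derive f x l : is_derive f x l -> continuity_pt f x.
Proof. intros H. apply derivable_continuous_pt. exists l. now apply is_derive_Reals. Qed.

Lemma right_cont_is_derive f x l : is_derive f x l -> right_cont f x.
Proof.
  intros H. apply (filterlim_filter_le_1 (F := locally x)); [apply filter_le_within|].
  now apply continuity_pt_filterlim, continuity_pt_is_derive with l.
Qed.

Lemma right_cont_plus f g a : right_cont f a -> right_cont g a ->
  right_cont (fun s => f s + g s) a.
Proof.
  intros Hf Hg. eapply filterlim_comp_2; [exact Hf|exact Hg|].
  apply (filterlim_plus (K := R_AbsRing) (V := R_NormedModule)).
Qed.

Lemma right_cont_mult f g a : right_cont f a -> right_cont g a ->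
  right_cont (fun s => f s * g s) a.
Proof.
  intros Hf Hg. eapply filterlim_comp_2; [exact Hf|exact Hg|].
  apply (filterlim_mult (K := R_AbsRing)).
Qed.

Lemma at_right_pos f t : right_cont f t -> 0 < f t -> at_right t (fun s => 0 < f s).
Proof.
  intros Hc Hp. apply Hc. exists (mkposreal _ Hp). intros y Hy.
  change (Rabs (y - f t) < f t) in Hy. apply Rabs_def2 in Hy. lra.
Qed.

Lemma at_right_interval t (P : R -> Prop) : P t -> at_right t P ->
  exists d, 0 < d /\ forall s, t <= s < t + d -> P s.
Proof.
  intros Ht [d Hd]. exists d. split; [apply cond_pos|].
  intros s [Hts Hs]. destruct (Req_dec s t) as [->|Hne]; [exact Ht|].
  apply Hd; [|lra]. change (Rabs (s - t) < d). apply Rabs_def1; lra.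
Qed.

Lemma right_cont_of_is_derive_pos f df : right_cont f 0 ->
  (forall x, 0 < x -> is_derive f x (df x)) -> forall t, 0 <= t -> right_cont f t.
Proof.
  intros H0 Hd t Ht. destruct (Rle_lt_or_eq_dec 0 t Ht) as [Htp| <-]; [|exact H0].
  now apply right_cont_is_derive with (df t), Hd.
Qed.

Lemma continuous_induction (P : R -> Prop) :
  (forall t, 0 <= t -> (forall s, 0 <= s < t -> P s) -> P t /\ at_right t P) ->
  forall t, 0 <= t -> P t.
Proof.
  intros Hstep T HT. apply NNPP. intros HnT.
  set (E := fun t => 0 <= t /\ forall s, 0 <= s < t -> P s).
  assert (Hbound : is_upper_bound E T).
  { intros t [Ht Hbelow]. apply Rnot_lt_le. intros HTt. apply HnT, Hbelow. lra. }
  destruct (completeness E (ex_intro _ T Hbound)) as [m [Hub Hlub]].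
  { exists 0. split; [lra|]. intros s Hs. lra. }
  assert (Hm : 0 <= m) by (apply Hub; split; [lra|intros s Hs; lra]).
  assert (Hbelow : forall s, 0 <= s < m -> P s).
  { intros s Hs. apply NNPP. intros Hns. assert (m <= s); [|lra].
    apply Hlub. intros t [Ht Ht']. apply Rnot_lt_le. intros Hst. apply Hns, Ht'. lra. }
  destruct (Hstep m Hm Hbelow) as [HPm Hright].
  destruct (at_right_interval m P HPm Hright) as [d [Hd Hnear]].
  assert (m + d / 2 <= m); [|lra].
  apply Hub. split; [lra|]. intros s Hs.
  destruct (Rlt_le_dec s m); [apply Hbelow; lra|apply Hnear; lra].
Qed.

Lemma MVT_right_cont_0 f df b : 0 < b -> right_cont f 0 ->
  (forall x, 0 < x -> is_derive f x (df x)) ->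
  exists c, 0 < c < b /\ f b - f 0 = df c * b.
Proof.
  intros Hb Hc Hd.
  (* [g] agrees with [f] on [0, b] and is continuous at 0, so the two-sided MVT applies. *)
  set (g := fun x => f (Rmax 0 x)).
  assert (Dg : forall x, 0 < x -> is_derive g x (df x)).
  { intros x Hx. apply (is_derive_ext_loc f); [|now apply Hd].
    exists (mkposreal _ Hx). intros y Hy. change (Rabs (y - x) < x) in Hy.
    apply Rabs_def2 in Hy. unfold g. rewrite Rmax_right; lra. }
  destruct (MVT_open g df 0 b Hb) as [c [Hc1 Hc2]].
  - intros x Hx. apply Dg. lra.
  - intros x [H0x Hxb]. destruct (Rle_lt_or_eq_dec 0 x H0x) as [Hx| <-].
    + now apply continuity_pt_is_derive with (df x), Dg.
    + apply continuity_pt_filterlim.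
      replace (g 0) with (f 0) by (unfold g; now rewrite Rmax_left by lra).
      intros P HP. destruct (Hc P HP) as [d Hdd]. exists d. intros y Hy. unfold g.
      destruct (Rle_lt_dec y 0).
      * rewrite Rmax_left by lra. now apply locally_singleton.
      * rewrite Rmax_right by lra. now apply Hdd.
  - exists c. split; [exact Hc1|]. unfold g in Hc2.
    rewrite Rmax_right, Rmax_left in Hc2 by lra. lra.
Qed.

Lemma is_derive_0_const f : right_cont f 0 -> (forall x, 0 < x -> is_derive f x 0) ->
  forall t, 0 < t -> f t = f 0.
Proof.
  intros Hc Hd t Ht.
  destruct (MVT_right_cont_0 f (fun _ => 0) t Ht Hc Hd) as [c [_ E]]. lra.
Qed.

(* [is_derive_plus] at type [R], so that [apply] unifies with [fun s => f s + g s]. *)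
Lemma is_derive_Rplus f g t l m : is_derive f t l -> is_derive g t m ->
  is_derive (fun s => f s + g s) t (l + m).
Proof. exact (is_derive_plus f g t l m). Qed.

Lemma is_derive_mult_exp f k t l : is_derive f t l ->
  is_derive (fun s => f s * exp (k * s)) t ((l + k * f t) * exp (k * t)).
Proof.
  intros Hf.
  assert (He : is_derive (fun s => exp (k * s)) t (k * exp (k * t))).
  { auto_derive; [easy|ring]. }
  replace ((l + k * f t) * exp (k * t)) with (l * exp (k * t) + f t * (k * exp (k * t))) by ring.
  exact (is_derive_mult f _ t l _ Hf He Rmult_comm).
Qed.

Lemma is_derive_ln_comp f t l : is_derive f t l -> 0 < f t ->
  is_derive (fun s => ln (f s)) t (l / f t).
Proof.
  intros Hf Hpos. exact (is_derive_comp ln f t _ l (is_derive_ln _ Hpos) Hf).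
Qed.

Lemma is_derive_sq_dev f t l a b : is_derive f t l -> b <> 0 ->
  is_derive (fun s => (f s - a) ^ 2 / b) t (2 * (f t - a) * l / b).
Proof.
  intros Hf Hb.
  assert (Hsq : is_derive (fun y => (y - a) ^ 2 / b) (f t) (2 * (f t - a) / b)).
  { auto_derive; [easy|field; exact Hb]. }
  replace (2 * (f t - a) * l / b) with (l * (2 * (f t - a) / b)) by (field; exact Hb).
  exact (is_derive_comp _ f t _ l Hsq Hf).
Qed.

Lemma pos_of_linear_lower_bound f df k t : 0 < t -> right_cont f 0 -> 0 < f 0 ->
  (forall x, 0 < x -> is_derive f x (df x)) ->
  (forall x, 0 < x < t -> 0 <= df x + k * f x) -> 0 < f t.
Proof.
  intros Ht Hc H0 Hd Hgrowth.
  destruct (MVT_right_cont_0 (fun s => f s * exp (k * s))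
              (fun s => (df s + k * f s) * exp (k * s)) t Ht) as [c [Hct E]].
  - apply right_cont_mult; [exact Hc|].
    apply right_cont_is_derive with (k * exp (k * 0)). auto_derive; [easy|ring].
  - intros x Hx. now apply is_derive_mult_exp, Hd.
  - rewrite Rmult_0_r, exp_0, Rmult_1_r in E.
    assert (0 <= (df c + k * f c) * exp (k * c) * t).
    { apply Rmult_le_pos; [apply Rmult_le_pos; [apply Hgrowth; lra|apply Rlt_le, exp_pos]|lra]. }
    assert (0 < f t * exp (k * t)) by lra.
    pose proof (exp_pos (k * t)). nra.
Qed.

(** * Eventual bounds and limits *)

Lemma level_kept f df T a :
  (forall x, T <= x -> is_derive f x (df x)) -> a <= f T ->
  (forall x, T < x -> f x < a -> 0 < df x) -> forall t, T <= t -> a <= f t.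
Proof.
  intros Hd HT Hrise t1 Ht1. apply Rnot_lt_le. intros Hlow.
  assert (Hcont : forall x, T <= x -> continuity_pt f x).
  { intros x Hx. now apply continuity_pt_is_derive with (df x), Hd. }
  set (E := fun s => T <= s <= t1 /\ a <= f s).
  destruct (completeness E) as [m [Hub Hlub]].
  { exists t1. intros s [Hs _]. lra. }
  { exists T. split; [lra|exact HT]. }
  assert (HTm : T <= m) by (apply Hub; split; [lra|exact HT]).
  assert (Hmt : m <= t1) by (apply Hlub; intros s [Hs _]; lra).
  assert (Hfm : a <= f m).
  { apply Rnot_lt_le. intros Hm.
    assert (Hnear : locally m (fun s => f s < a)).
    { apply (proj1 (continuity_pt_filterlim f m) (Hcont m HTm) (fun y => y < a)).
      exists (mkposreal _ (proj2 (Rlt_0_minus _ _) Hm)). intros y Hy.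
      change (Rabs (y - f m) < a - f m) in Hy. apply Rabs_def2 in Hy. lra. }
    destruct Hnear as [d Hd'].
    assert (m <= m - d / 2); [|pose proof (cond_pos d); lra].
    apply Hlub. intros s [Hs Has]. apply Rnot_lt_le. intros Hsm.
    assert (s <= m) by (apply Hub; now split).
    assert (f s < a); [|lra]. apply Hd'. change (Rabs (s - m) < d). apply Rabs_def1; lra. }
  assert (Hmt' : m < t1) by (destruct (Req_dec m t1); [subst; lra|lra]).
  destruct (MVT_open f df m t1 Hmt') as [c [Hc Hincr]].
  - intros x Hx. apply Hd. lra.
  - intros x Hx. apply Hcont. lra.
  - assert (Hfc : f c < a).
    { apply Rnot_le_lt. intros Hc'. assert (c <= m) by (apply Hub; split; [lra|exact Hc']). lra. }
    pose proof (Hrise c ltac:(lra) Hfc). nra.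
Qed.

Lemma level_reached f df T a r : 0 < r ->
  (forall x, T <= x -> is_derive f x (df x)) ->
  (forall x, T <= x -> f x < a -> r <= df x) -> exists t, T <= t /\ a <= f t.
Proof.
  intros Hr Hd Hrise. apply NNPP. intros Hnever.
  assert (Hlow : forall t, T <= t -> f t < a).
  { intros t Ht. apply Rnot_le_lt. intros Hle. apply Hnever. now exists t. }
  set (b := T + Rabs (a - f T) / r + 1).
  assert (Hgain : a - f T < r * (b - T)).
  { unfold b. replace (r * (T + Rabs (a - f T) / r + 1 - T)) with (Rabs (a - f T) + r)
      by (field; lra).
    pose proof (Rle_abs (a - f T)). lra. }
  assert (HTb : T < b)
    by (unfold b; pose proof (Rdiv_le_0_compat _ _ (Rabs_pos (a - f T)) Hr); lra).
  destruct (MVT_open f df T b HTb) as [c [Hc Hincr]].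
  - intros x Hx. apply Hd. lra.
  - intros x Hx. apply continuity_pt_is_derive with (df x), Hd. lra.
  - pose proof (Hrise c ltac:(lra) (Hlow c ltac:(lra))).
    pose proof (Hlow b ltac:(lra)). nra.
Qed.

Lemma eventually_ge_of_rate f df a r : 0 < r ->
  (forall x, 0 < x -> is_derive f x (df x)) ->
  Rbar_locally' p_infty (fun x => f x < a -> r <= df x) ->
  Rbar_locally' p_infty (fun t => a <= f t).
Proof.
  intros Hr Hd [T HT].
  set (T1 := Rmax 1 (T + 1)).
  assert (HT1 : 1 <= T1 /\ T + 1 <= T1) by (split; [apply Rmax_l|apply Rmax_r]).
  destruct (level_reached f df T1 a r Hr) as [t0 [Ht0 Hft0]].
  - intros x Hx. apply Hd. lra.
  - intros x Hx. apply HT. lra.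
  - exists t0. intros t Ht. apply (level_kept f df t0 a); [|exact Hft0| |lra].
    + intros x Hx. apply Hd. lra.
    + intros x Hx Hfx. pose proof (HT x ltac:(lra) Hfx). lra.
Qed.

Lemma is_lim_exp_decay K al : 0 < al -> is_lim (fun t => K * exp (- (al * t))) p_infty 0.
Proof.
  intros Hal. replace (Finite 0) with (Rbar_mult K 0) by (simpl; f_equal; ring).
  apply is_lim_scal_l. apply (is_lim_comp exp _ p_infty 0 m_infty).
  - exact is_lim_exp_m.
  - replace m_infty with (Rbar_opp (Rbar_mult al p_infty)).
    + apply is_lim_opp, is_lim_scal_l, is_lim_id.
    + simpl. destruct (Rle_dec 0 al); [|lra]. destruct (Rle_lt_or_eq_dec 0 al r); [easy|lra].
  - exists 0. easy.
Qed.

Lemma is_lim_0_of_dissipation V dV al : 0 < al ->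
  (forall t, 0 < t -> is_derive V t (dV t)) ->
  (forall t, 0 < t -> dV t + al * V t <= 0) ->
  (forall t, 0 <= V t) -> is_lim V p_infty 0.
Proof.
  intros Hal Hd Hdiss Hnn.
  assert (Hdecay : forall t, 1 < t -> V t * exp (al * t) <= V 1 * exp al).
  { intros t Ht.
    destruct (MVT_open (fun s => V s * exp (al * s))
                (fun s => (dV s + al * V s) * exp (al * s)) 1 t Ht) as [c [Hc E]].
    - intros x Hx. apply is_derive_mult_exp, Hd. lra.
    - intros x Hx. apply continuity_pt_is_derive with ((dV x + al * V x) * exp (al * x)).
      apply is_derive_mult_exp, Hd. lra.
    - rewrite Rmult_1_r in E.
      assert ((dV c + al * V c) * exp (al * c) * (t - 1) <= 0); [|lra].
      apply Rmult_le_0_r; [|lra]. apply Rmult_le_0_r; [apply Hdiss; lra|apply Rlt_le, exp_pos]. }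
  apply (is_lim_le_le_loc (fun _ => 0) (fun t => V 1 * exp al * exp (- (al * t)))).
  - exists 1. intros t Ht. split; [apply Hnn|].
    apply (Rmult_le_reg_r (exp (al * t))); [apply exp_pos|].
    rewrite Rmult_assoc, <- exp_plus, Rplus_opp_l, exp_0, Rmult_1_r. now apply Hdecay.
  - apply is_lim_const.
  - now apply is_lim_exp_decay.
Qed.

Lemma is_lim_of_sq_le f V a K : 0 < K ->
  (forall t, (f t - a) ^ 2 <= K * V t) -> is_lim V p_infty 0 -> is_lim f p_infty a.
Proof.
  intros HK Hsq HV. apply is_lim_spec. intros eps.
  assert (Hw : 0 < eps ^ 2 / K)
    by (apply Rdiv_lt_0_compat; [pose proof (cond_pos eps); nra|exact HK]).
  destruct (proj2 (is_lim_spec _ _ _) HV (mkposreal _ Hw)) as [T HT].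
  exists T. intros t Ht. specialize (HT t Ht). simpl in HT.
  rewrite Rminus_0_r in HT. apply Rabs_def2 in HT.
  assert (Hlt : (f t - a) ^ 2 < eps ^ 2).
  { apply (Rle_lt_trans _ (K * V t)); [apply Hsq|].
    apply (Rmult_lt_reg_r (/ K)); [now apply Rinv_0_lt_compat|].
    replace (K * V t * / K) with (V t) by (field; lra). lra. }
  pose proof (cond_pos eps). apply Rabs_def1; nra.
Qed.

Lemma is_lim_of_log_rate z h zs : 0 < zs ->
  (forall t, 0 < t -> 0 < z t) ->
  (forall t, 0 < t -> is_derive z t (z t * h t)) ->
  (forall ep, 0 < ep -> exists r, 0 < r /\ Rbar_locally' p_infty (fun t =>
      (zs + ep < z t -> h t <= - r) /\ (z t < zs - ep -> r <= h t))) ->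
  is_lim z p_infty zs.
Proof.
  intros Hzs Hpos Hd Htrap. apply is_lim_spec. intros eps.
  set (ep := Rmin eps zs / 2).
  assert (Hep : 0 < ep < eps /\ ep < zs).
  { pose proof (Rmin_l eps zs). pose proof (Rmin_r eps zs).
    pose proof (Rmin_glb_lt _ _ _ (cond_pos eps) Hzs). unfold ep. lra. }
  destruct (Htrap ep ltac:(lra)) as [r [Hr Hev]].
  assert (Hev' : Rbar_locally' p_infty (fun t => 0 < t /\
      (zs + ep < z t -> h t <= - r) /\ (z t < zs - ep -> r <= h t))).
  { apply filter_and; [exists 0; easy|exact Hev]. }
  (* [(ln z)' = h], so the trap turns into uniform rate bounds for [ln z]. *)
  assert (Dln : forall t, 0 < t -> is_derive (fun s => ln (z s)) t (h t)).
  { intros t Ht. replace (h t) with (z t * h t / z t) by (field; apply Rgt_not_eq, Hpos, Ht).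
    apply is_derive_ln_comp; auto. }
  assert (Hlower : Rbar_locally' p_infty (fun t => ln (zs - ep) <= ln (z t))).
  { apply (eventually_ge_of_rate _ h _ r Hr Dln).
    eapply filter_imp; [|exact Hev']. intros t (Ht & _ & Hlo) Hln. apply Hlo.
    apply ln_lt_inv; [apply Hpos, Ht|lra|exact Hln]. }
  assert (Hupper : Rbar_locally' p_infty (fun t => - ln (zs + ep) <= - ln (z t))).
  { apply (eventually_ge_of_rate _ (fun t => - h t) _ r Hr).
    - intros t Ht. apply (is_derive_opp (fun s => ln (z s))), Dln, Ht.
    - eapply filter_imp; [|exact Hev']. intros t (Ht & Hup & _) Hln.
      enough (h t <= - r) by lra. apply Hup.
      apply ln_lt_inv; [lra|apply Hpos, Ht|lra]. }
  eapply filter_imp; [|exact (filter_and _ _ Hev' (filter_and _ _ Hlower Hupper))].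
  intros t ((Ht & _) & Hlo & Hup). pose proof (Hpos t Ht) as Hzt.
  assert (zs - ep <= z t).
  { apply Rnot_lt_le. intros Hlt. pose proof (ln_increasing _ _ Hzt Hlt). lra. }
  assert (z t <= zs + ep).
  { apply Rnot_lt_le. intros Hlt. pose proof (ln_increasing (zs + ep) (z t) ltac:(lra) Hlt). lra. }
  apply Rabs_def1; lra.
Qed.

Lemma Rdiv_le_of_den_le c N d D : 0 <= c -> c <= N -> 0 < d <= D -> c / D <= N / d.
Proof.
  intros Hc HN Hd. apply Rle_trans with (c / d).
  - apply Rmult_le_compat_l; [exact Hc|]. apply Rinv_le_contravar; lra.
  - apply Rmult_le_compat_r; [apply Rlt_le, Rinv_0_lt_compat|]; lra.
Qed.

Lemma rate_trap (P Q M a D : R) (y g den : R -> R) : 0 < P -> 0 < Q -> 0 < D ->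
  is_lim g p_infty a -> Rbar_locally' p_infty (fun t => 0 < den t <= D) ->
  forall ep, 0 < ep -> exists r, 0 < r /\ Rbar_locally' p_infty (fun t =>
    ((P * M - Q * a) / P + ep < y t -> (P * (M - y t) - Q * g t) / den t <= - r) /\
    (y t < (P * M - Q * a) / P - ep -> r <= (P * (M - y t) - Q * g t) / den t)).
Proof.
  intros HP HQ HD Hg Hden ep Hep.
  assert (Hc : 0 < P * ep / 2) by (apply Rdiv_lt_0_compat; nra).
  exists (P * ep / 2 / D). split; [now apply Rdiv_lt_0_compat|].
  assert (Heta : 0 < P * ep / (2 * Q)) by (apply Rdiv_lt_0_compat; nra).
  assert (Hnear : Rbar_locally' p_infty (fun t => Rabs (g t - a) < P * ep / (2 * Q)))
    by exact (proj2 (is_lim_spec g p_infty a) Hg (mkposreal _ Heta)).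
  eapply filter_imp; [|exact (filter_and _ _ Hden Hnear)].
  intros t [Hdt Hgt]. apply Rabs_def2 in Hgt.
  assert (EN : P * (M - y t) - Q * g t = P * ((P * M - Q * a) / P - y t) - Q * (g t - a))
    by (field; lra).
  assert (Hnoise : Q * Rabs (g t - a) < P * ep / 2).
  { replace (P * ep / 2) with (Q * (P * ep / (2 * Q))) by (field; lra).
    apply Rmult_lt_compat_l; [exact HQ|]. apply Rabs_def1; lra. }
  pose proof (Rle_abs (g t - a)). pose proof (Rle_abs (- (g t - a))). rewrite Rabs_Ropp in *.
  split; intros Hy.
  - assert (Hdrop : P * ep / 2 / D <= - (P * (M - y t) - Q * g t) / den t).
    { apply Rdiv_le_of_den_le; [lra| |exact Hdt]. rewrite EN. nra. }
    rewrite Rdiv_opp_l in Hdrop. lra.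
  - apply Rdiv_le_of_den_le; [lra| |exact Hdt]. rewrite EN. nra.
Qed.

(** * The linear cascade *)

Lemma weighted_sq_le_sq_diffs e1 e2 e3 u1 u2 u3 : 0 <= e1 + e2 + e3 ->
  e1 * u1 + e2 * u2 + e3 * u3 = 0 ->
  e1 * u1 ^ 2 + e2 * u2 ^ 2 + e3 * u3 ^ 2 <= e1 * (u1 - u2) ^ 2 + e3 * (u3 - u2) ^ 2.
Proof.
  intros He Hsum.
  assert (E : e1 * (u1 - u2) ^ 2 + e3 * (u3 - u2) ^ 2 - (e1 * u1 ^ 2 + e2 * u2 ^ 2 + e3 * u3 ^ 2)
              = (e1 + e2 + e3) * u2 ^ 2 - 2 * u2 * (e1 * u1 + e2 * u2 + e3 * u3)) by ring.
  rewrite Hsum in E. nra.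
Qed.

Lemma sq_div_nonneg x a : 0 < a -> 0 <= x ^ 2 / a.
Proof. intros Ha. apply Rdiv_le_0_compat; [apply pow2_ge_0|exact Ha]. Qed.

Section Cascade.

Variables k5 k6 k7 k8 : R.
Variables c cp cpp : R -> R.
Hypotheses (Hk5 : 0 < k5) (Hk6 : 0 < k6) (Hk7 : 0 < k7) (Hk8 : 0 < k8).
Hypotheses (Rc : right_cont c 0) (Rcp : right_cont cp 0) (Rcpp : right_cont cpp 0).
Hypothesis Dc : forall t, 0 < t -> is_derive c t (k6 * cp t - k5 * c t).
Hypothesis Dcp : forall t, 0 < t ->
  is_derive cp t (k5 * c t + k8 * cpp t - (k6 + k7) * cp t).
Hypothesis Dcpp : forall t, 0 < t -> is_derive cpp t (k7 * cp t - k8 * cpp t).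

Lemma cascade_mass_conserved t : 0 < t -> c t + cp t + cpp t = c 0 + cp 0 + cpp 0.
Proof.
  apply (is_derive_0_const (fun s => c s + cp s + cpp s)).
  - now apply right_cont_plus; [apply right_cont_plus|].
  - intros x Hx.
    replace 0 with ((k6 * cp x - k5 * c x) + (k5 * c x + k8 * cpp x - (k6 + k7) * cp x)
                    + (k7 * cp x - k8 * cpp x)) by ring.
    apply is_derive_Rplus; [apply is_derive_Rplus|]; auto.
Qed.

Let L := c 0 + cp 0 + cpp 0.
Hypothesis HL : 0 < L.

(* The equilibrium of mass [L]; it is in detailed balance: [k5 e1 = k6 e2], [k7 e2 = k8 e3]. *)
Let q := L / (k6 * k8 + k5 * k8 + k5 * k7).
Let e1 := k6 * k8 * q.
Let e2 := k5 * k8 * q.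
Let e3 := k5 * k7 * q.

Let V3 x1 x2 x3 := (x1 - e1) ^ 2 / e1 + (x2 - e2) ^ 2 / e2 + (x3 - e3) ^ 2 / e3.
Let dV3 x1 x2 x3 :=
  2 * (x1 - e1) * (k6 * x2 - k5 * x1) / e1
  + 2 * (x2 - e2) * (k5 * x1 + k8 * x3 - (k6 + k7) * x2) / e2
  + 2 * (x3 - e3) * (k7 * x2 - k8 * x3) / e3.

Let q_pos : 0 < q.
Proof. apply Rdiv_lt_0_compat; nra. Qed.

Let equilibrium_pos : 0 < e1 /\ 0 < e2 /\ 0 < e3.
Proof. pose proof q_pos. unfold e1, e2, e3. repeat split; apply Rmult_lt_0_compat; nra. Qed.

Lemma cascade_dissipation x1 x2 x3 : x1 + x2 + x3 = e1 + e2 + e3 ->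
  dV3 x1 x2 x3 + Rmin k5 k8 * V3 x1 x2 x3 <= 0.
Proof.
  intros Hmass. pose proof q_pos. destruct equilibrium_pos as (He1 & He2 & He3).
  (* Detailed balance turns [dV3] into a negative sum of squared differences of the [u_i],
     and [sum e_i u_i = 0] bounds [V3] by those same squares. *)
  set (u1 := (x1 - e1) / e1). set (u2 := (x2 - e2) / e2). set (u3 := (x3 - e3) / e3).
  assert (Hsum : e1 * u1 + e2 * u2 + e3 * u3 = 0).
  { replace (e1 * u1 + e2 * u2 + e3 * u3) with (x1 + x2 + x3 - (e1 + e2 + e3))
      by (unfold u1, u2, u3; field; repeat split; lra). lra. }
  assert (EdV : dV3 x1 x2 x3 = -2 * (k5 * e1 * (u1 - u2) ^ 2 + k7 * e2 * (u2 - u3) ^ 2)).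
  { unfold dV3, u1, u2, u3. unfold e1, e2, e3 in *. field. repeat split; lra. }
  assert (EV : V3 x1 x2 x3 = e1 * u1 ^ 2 + e2 * u2 ^ 2 + e3 * u3 ^ 2).
  { unfold V3, u1, u2, u3. field. repeat split; lra. }
  pose proof (weighted_sq_le_sq_diffs e1 e2 e3 u1 u2 u3 ltac:(lra) Hsum) as Hvar.
  set (al := Rmin k5 k8).
  assert (Hal : 0 <= al <= k5 /\ al <= k8).
  { pose proof (Rmin_glb_lt _ _ _ Hk5 Hk8). pose proof (Rmin_l k5 k8). pose proof (Rmin_r k5 k8).
    unfold al. lra. }
  assert (Hrate : al * (e1 * (u1 - u2) ^ 2 + e3 * (u3 - u2) ^ 2)
                  <= k5 * (e1 * (u1 - u2) ^ 2) + k8 * (e3 * (u3 - u2) ^ 2)).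
  { pose proof (pow2_ge_0 (u1 - u2)). pose proof (pow2_ge_0 (u3 - u2)).
    rewrite Rmult_plus_distr_l. apply Rplus_le_compat; apply Rmult_le_compat_r; nra. }
  assert (Hbal : k8 * (e3 * (u3 - u2) ^ 2) = k7 * e2 * (u2 - u3) ^ 2) by (unfold e2, e3; ring).
  pose proof (Rmult_le_compat_l al _ _ (proj1 (proj1 Hal)) Hvar).
  assert (0 <= k5 * e1 * (u1 - u2) ^ 2 + k7 * e2 * (u2 - u3) ^ 2).
  { pose proof (pow2_ge_0 (u1 - u2)). pose proof (pow2_ge_0 (u2 - u3)).
    apply Rplus_le_le_0_compat; apply Rmult_le_pos; nra. }
  rewrite EdV, EV. lra.
Qed.

Lemma cascade_cpp_limit : is_lim cpp p_infty (cpp_bar k5 k6 k7 k8 L).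
Proof.
  destruct equilibrium_pos as (He1 & He2 & He3).
  set (V := fun t => V3 (c t) (cp t) (cpp t)).
  replace (cpp_bar k5 k6 k7 k8 L) with e3.
  2:{ assert (Hsum : 0 < k6 * k8 + k5 * k8 + k5 * k7) by nra.
      unfold cpp_bar, e3, q. field. split; [|lra].
      replace ((k6 * k8) ^ 2 + k5 * k6 * k8 ^ 2 + k5 * k6 * k7 * k8)
        with (k6 * k8 * (k6 * k8 + k5 * k8 + k5 * k7)) by ring.
      apply Rgt_not_eq, Rmult_lt_0_compat; nra. }
  apply (is_lim_of_sq_le cpp V e3 e3 He3).
  { intros t. unfold V, V3. rewrite !Rmult_plus_distr_l.
    replace (e3 * ((cpp t - e3) ^ 2 / e3)) with ((cpp t - e3) ^ 2) by (field; lra).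
    pose proof (Rmult_le_pos _ _ (Rlt_le _ _ He3) (sq_div_nonneg (c t - e1) e1 He1)).
    pose proof (Rmult_le_pos _ _ (Rlt_le _ _ He3) (sq_div_nonneg (cp t - e2) e2 He2)). lra. }
  apply (is_lim_0_of_dissipation V (fun t => dV3 (c t) (cp t) (cpp t)) (Rmin k5 k8)).
  - now apply Rmin_glb_lt.
  - intros t Ht. unfold V, V3, dV3.
    apply is_derive_Rplus; [apply is_derive_Rplus|]; apply is_derive_sq_dev; auto; lra.
  - intros t Ht. apply cascade_dissipation.
    rewrite cascade_mass_conserved by exact Ht. fold L. unfold e1, e2, e3, q. field. nra.
  - intros t. unfold V, V3.
    pose proof (sq_div_nonneg (c t - e1) e1 He1). pose proof (sq_div_nonneg (cp t - e2) e2 He2).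
    pose proof (sq_div_nonneg (cpp t - e3) e3 He3). lra.
Qed.

End Cascade.

(** * The full system *)

Lemma m_of_pos k1 k2 theta mu xs z cpp : 0 < k1 -> 0 < k2 -> 0 < theta -> 0 < mu ->
  0 < xs -> 0 < z -> 0 < cpp -> 0 < m_of k1 k2 theta mu xs z cpp.
Proof. intros. unfold m_of. apply Rdiv_lt_0_compat; nra. Qed.

Lemma m_of_mul_den k1 k2 theta mu xs z cpp : k2 * cpp + theta * z <> 0 ->
  m_of k1 k2 theta mu xs z cpp * (k2 * cpp + theta * z) = k1 * xs + mu * z.
Proof. intros Hden. unfold m_of. field. exact Hden. Qed.

Lemma m_of_rate k1 k2 theta mu xs z cpp : k2 * cpp + theta * z <> 0 ->
  theta * m_of k1 k2 theta mu xs z cpp - mu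
  = (theta * k1 * xs - mu * k2 * cpp) / (k2 * cpp + theta * z).
Proof. intros Hden. unfold m_of. field. exact Hden. Qed.

Section Model.

Variables k1 k2 k5 k6 k7 k8 theta mu : R.
Variables c cp cpp xs z : R -> R.
Hypotheses (Hk1 : 0 < k1) (Hk2 : 0 < k2) (Hk5 : 0 < k5) (Hk6 : 0 < k6)
  (Hk7 : 0 < k7) (Hk8 : 0 < k8) (Htheta : 0 < theta) (Hmu : 0 < mu).
Hypotheses (Hc0 : 0 < c 0) (Hcp0 : 0 < cp 0) (Hcpp0 : 0 < cpp 0) (Hxs0 : 0 < xs 0) (Hz0 : 0 < z 0).
Hypotheses (Rc : right_cont c 0) (Rcp : right_cont cp 0) (Rcpp : right_cont cpp 0)
  (Rxs : right_cont xs 0) (Rz : right_cont z 0).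
Hypothesis Dc : forall t, 0 < t -> is_derive c t (k6 * cp t - k5 * c t).
Hypothesis Dcp : forall t, 0 < t ->
  is_derive cp t (k5 * c t + k8 * cpp t - (k6 + k7) * cp t).
Hypothesis Dcpp : forall t, 0 < t -> is_derive cpp t (k7 * cp t - k8 * cpp t).
Hypothesis Dxs : forall t, 0 < t -> is_derive xs t
  (k2 * cpp t * m_of k1 k2 theta mu (xs t) (z t) (cpp t) - k1 * xs t).
Hypothesis Dz : forall t, 0 < t -> is_derive z t
  (z t * (theta * m_of k1 k2 theta mu (xs t) (z t) (cpp t) - mu)).

Lemma solution_pos t : 0 <= t -> 0 < c t /\ 0 < cp t /\ 0 < cpp t /\ 0 < xs t /\ 0 < z t.
Proof.
  revert t. apply continuous_induction. intros t Ht IH.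
  assert (Hnow : 0 < c t /\ 0 < cp t /\ 0 < cpp t /\ 0 < xs t /\ 0 < z t).
  { destruct (Rle_lt_or_eq_dec 0 t Ht) as [Htp| <-]; [|now repeat split].
    assert (Hm : forall x, 0 < x < t -> 0 < m_of k1 k2 theta mu (xs x) (z x) (cpp x)).
    { intros x Hx. destruct (IH x ltac:(lra)) as (? & ? & ? & ? & ?). now apply m_of_pos. }
    repeat split.
    - apply (pos_of_linear_lower_bound c _ k5 t Htp Rc Hc0 Dc).
      intros x Hx. destruct (IH x ltac:(lra)) as (? & ? & ? & ? & ?). nra.
    - apply (pos_of_linear_lower_bound cp _ (k6 + k7) t Htp Rcp Hcp0 Dcp).
      intros x Hx. destruct (IH x ltac:(lra)) as (? & ? & ? & ? & ?). nra.
    - apply (pos_of_linear_lower_bound cpp _ k8 t Htp Rcpp Hcpp0 Dcpp).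
      intros x Hx. destruct (IH x ltac:(lra)) as (? & ? & ? & ? & ?). nra.
    - apply (pos_of_linear_lower_bound xs _ k1 t Htp Rxs Hxs0 Dxs).
      intros x Hx. pose proof (Hm x Hx). destruct (IH x ltac:(lra)) as (? & ? & ? & ? & ?).
      assert (0 < k2 * cpp x * m_of k1 k2 theta mu (xs x) (z x) (cpp x))
        by (apply Rmult_lt_0_compat; [apply Rmult_lt_0_compat|]; auto).
      lra.
    - apply (pos_of_linear_lower_bound z _ mu t Htp Rz Hz0 Dz).
      intros x Hx. pose proof (Hm x Hx). destruct (IH x ltac:(lra)) as (? & ? & ? & ? & ?).
      assert (0 < z x * (theta * m_of k1 k2 theta mu (xs x) (z x) (cpp x)))
        by (apply Rmult_lt_0_compat; [|apply Rmult_lt_0_compat]; auto).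
      lra. }
  split; [exact Hnow|]. destruct Hnow as (? & ? & ? & ? & ?).
  repeat apply filter_and; apply at_right_pos; try assumption.
  - exact (right_cont_of_is_derive_pos c _ Rc Dc t Ht).
  - exact (right_cont_of_is_derive_pos cp _ Rcp Dcp t Ht).
  - exact (right_cont_of_is_derive_pos cpp _ Rcpp Dcpp t Ht).
  - exact (right_cont_of_is_derive_pos xs _ Rxs Dxs t Ht).
  - exact (right_cont_of_is_derive_pos z _ Rz Dz t Ht).
Qed.

Lemma xs_z_conserved t : 0 < t -> xs t + z t = xs 0 + z 0.
Proof.
  apply (is_derive_0_const (fun s => xs s + z s)); [now apply right_cont_plus|].
  intros x Hx. destruct (solution_pos x ltac:(lra)) as (_ & _ & ? & ? & ?).
  pose proof (m_of_mul_den k1 k2 theta mu (xs x) (z x) (cpp x) ltac:(nra)).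
  replace 0 with (k2 * cpp x * m_of k1 k2 theta mu (xs x) (z x) (cpp x) - k1 * xs x
                  + z x * (theta * m_of k1 k2 theta mu (xs x) (z x) (cpp x) - mu)) by nra.
  apply is_derive_Rplus; auto.
Qed.

Lemma z_log_rate t : 0 < t -> is_derive z t (z t *
  ((theta * k1 * (xs 0 + z 0 - z t) - mu * k2 * cpp t) / (k2 * cpp t + theta * z t))).
Proof.
  intros Ht. destruct (solution_pos t ltac:(lra)) as (_ & _ & ? & ? & ?).
  rewrite <- (xs_z_conserved t Ht), <- m_of_rate by nra.
  replace (xs t + z t - z t) with (xs t) by ring. auto.
Qed.

End Model.

Theorem mainTheorem6
  (k1 k2 k5 k6 k7 k8 theta mu : R)
  (c cp cpp xs z : R -> R) :
  0 < k1 -> 0 < k2 -> 0 < k5 -> 0 < k6 -> 0 < k7 -> 0 < k8 ->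
  0 < theta -> 0 < mu ->
  0 < c 0 -> 0 < cp 0 -> 0 < cpp 0 -> 0 < xs 0 -> 0 < z 0 ->
  right_cont c 0 -> right_cont cp 0 -> right_cont cpp 0 ->
  right_cont xs 0 -> right_cont z 0 ->
  (forall t, 0 < t -> is_derive c t (k6 * cp t - k5 * c t)) ->
  (forall t, 0 < t -> is_derive cp t (k5 * c t + k8 * cpp t - (k6 + k7) * cp t)) ->
  (forall t, 0 < t -> is_derive cpp t (k7 * cp t - k8 * cpp t)) ->
  (forall t, 0 < t -> is_derive xs t
      (k2 * cpp t * m_of k1 k2 theta mu (xs t) (z t) (cpp t) - k1 * xs t)) ->
  (forall t, 0 < t -> is_derive z t
      (z t * (theta * m_of k1 k2 theta mu (xs t) (z t) (cpp t) - mu))) ->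
  let M := xs 0 + z 0 in
  let L := c 0 + cp 0 + cpp 0 in
  theta * k1 * M > mu * k2 * cpp_bar k5 k6 k7 k8 L ->
  is_lim z p_infty
    (Finite ((theta * k1 * M - mu * k2 * cpp_bar k5 k6 k7 k8 L) / (theta * k1))).
Proof.
  intros Hk1 Hk2 Hk5 Hk6 Hk7 Hk8 Htheta Hmu Hc0 Hcp0 Hcpp0 Hxs0 Hz0 Rc Rcp Rcpp Rxs Rz
    Dc Dcp Dcpp Dxs Dz M L Hsurvive.
  assert (Hpos : forall t, 0 <= t -> 0 < c t /\ 0 < cp t /\ 0 < cpp t /\ 0 < xs t /\ 0 < z t)
    by (intros t Ht; eapply (solution_pos k1 k2 k5 k6 k7 k8 theta mu c cp cpp xs z); eauto).
  assert (HL : forall t, 0 < t -> c t + cp t + cpp t = L)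
    by (intros t Ht; eapply (cascade_mass_conserved k5 k6 k7 k8 c cp cpp); eauto).
  assert (HM : forall t, 0 < t -> xs t + z t = M)
    by (intros t Ht; eapply (xs_z_conserved k1 k2 k5 k6 k7 k8 theta mu c cp cpp xs z); eauto).
  assert (Hcpp : is_lim cpp p_infty (cpp_bar k5 k6 k7 k8 L))
    by (apply cascade_cpp_limit; auto; unfold L; lra).
  apply (is_lim_of_log_rate z (fun t =>
    (theta * k1 * (M - z t) - mu * k2 * cpp t) / (k2 * cpp t + theta * z t))).
  - apply Rdiv_lt_0_compat; nra.
  - intros t Ht. apply Hpos. lra.
  - intros t Ht. eapply (z_log_rate k1 k2 k5 k6 k7 k8 theta mu c cp cpp xs z); eauto.
  - apply (rate_trap _ _ _ _ (k2 * L + theta * M)); [nra|nra|unfold L, M; nra|exact Hcpp|].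
    exists 0. intros t Ht. destruct (Hpos t ltac:(lra)) as (? & ? & ? & ? & ?).
    specialize (HL t Ht). specialize (HM t Ht). split; nra.
Qed.
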